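(* Consider the distributed associative memory setting described in the context, with agents running the DAM-TOGD update, and suppose that for each agent $n$ the learning rate sequence $(\eta_{n,t})_{t\ge 1}$ is positive and non-increasing in $t$. Then the regret satisfies $$\mathrm{Reg}(T) \le \sum_{n \in \mathcal{N}} \left( Q_n \sum_{t=\tau_{n,\min}+1}^{T+\tau_{n,\max}} \eta_{n,t} + P_n\, \eta_{n,\tau_{n,\min}+1} + H_n + C_n \right),$$ where $$Q_n = \frac{K_n}{2}\sum_{m\in\mathcal{W}_n} L_m + |\mathcal{W}_n|\, K_n^2 \sum_{m\in\mathcal{W}_n}\tau_{n,m},\qquad P_n = |\mathcal{W}_n|^2 K_n^2\, \tau_{n,\max}^2,$$ $$H_n = \sum_{t=\tau_{n,\min}+1}^{T+\tau_{n,\max}} \frac{\|\mathbf{X}_{n,t}-\mathbf{U}_n^*\|^2 - \|\mathbf{X}_{n,t+1}-\mathbf{U}_n^*\|^2}{2\eta_{n,t}},\qquad C_n = \frac{\Delta\tau_n}{2}\left( K_n\sum_{m\in\mathcal{W}_n} L_m + |\mathcal{W}_n|\, B^2\right),$$ with $K_n = \max_{m\in\mathcal{W}_n} w_{n,m}L_m$, $\tau_{n,\min}=\min_{m\in\mathcal{W}_n}\tau_{n,m}$, $\tau_{n,\max}=\max_{m\in\mathcal{W}_n}\tau_{n,m}$, $\Delta\tau_n=\tau_{n,\max}-\tau_{n,\min}$, and $|\mathcal{W}_n|$ the cardinality of $\mathcal{W}_n$.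
   Context: There are $N$ agents indexed by $\mathcal{N}=\{1,\dots,N\}$. At each time $t=1,2,\dots$, agent $m$ has a convex loss function $f_{m,t}:\mathcal{X}\to\mathbb{R}$ (e.g. built from a key–value pair $(\mathbf{k}_{m,t},\mathbf{v}_{m,t})$), which only agent $m$ can evaluate. The feasible set $\mathcal{X}$ (a set of matrices) is closed, convex and bounded with diameter $B$, and $\|\nabla f_{m,t}(\mathbf{X})\|_F\le L_m$ for all $m$, $t$ and $\mathbf{X}\in\mathcal{X}$, with finite $L_m>0$. Norms $\|\cdot\|$ are Frobenius norms and $\Pi_{\mathcal{X}}$ denotes Euclidean (Frobenius) projection onto $\mathcal{X}$. A row-stochastic matrix $\mathbf{W}$ with entries $w_{n,m}\in[0,1]$, $\sum_m w_{n,m}=1$, is given; $\mathcal{W}_n=\{m\in\mathcal{N}: w_{n,m}>0\}$. Agent $n$ maintains iterates $\mathbf{X}_{n,t}\in\mathcal{X}$ and its cumulative loss is $\mathcal{L}_n^T(\mathbf{X}_n^T)=\sum_{t=1}^T\sum_{m\in\mathcal{W}_n} w_{n,m} f_{m,t}(\mathbf{X}_{n,t})$. Let $\mathbf{U}_n^*\in\arg\min_{\mathbf{U}\in\mathcal{X}}\sum_{t=1}^T\sum_{m\in\mathcal{W}_n} w_{n,m}f_{m,t}(\mathbf{U})$, and define the regret $\mathrm{Reg}(T)=\sum_{n\in\mathcal{N}}\big(\mathcal{L}_n^T(\mathbf{X}_n^T)-\mathcal{L}_n^T(\mathbf{U}_n^* )\big)$ (with $\mathcal{L}_n^T(\mathbf{U}_n^*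 )$ meaning the constant sequence $\mathbf{U}_n^*$). Agents communicate over a connected undirected graph $\mathcal{G}=(\mathcal{N},\mathcal{E})$. For each $n$, a Steiner tree $\mathcal{T}_n$ in $\mathcal{G}$ rooted at $n$ and containing paths from $n$ to every agent of $\mathcal{W}_n$ is fixed; $\tilde\tau_{n,m}$ is the number of edges on the path in $\mathcal{T}_n$ from $n$ to $m$ (so $\tilde\tau_{n,n}=0$), and $\tau_{n,m}=2\tilde\tau_{n,m}$ is the round-trip delay: each message takes one time step per edge, so agent $n$ obtains $\nabla f_{m,s}(\mathbf{X}_{n,s})$ at time $s+\tau_{n,m}$. DAM-TOGD: starting from an initial point $\mathbf{X}_{n,1}\in\mathcal{X}$, each agent $n$ updates, for $t\ge1$, $$\mathbf{X}_{n,t+1}=\Pi_{\mathcal{X}}\Big[\mathbf{X}_{n,t}-\eta_{n,t}\sum_{m\in\mathcal{W}_n} w_{n,m}\nabla f_{m,t-\tau_{n,m}}(\mathbf{X}_{n,t-\tau_{n,m}})\,\mathbb{1}_{\{t>\tau_{n,m}\}}\Big],$$ where $\eta_{n,t}>0$ is the learning rate (iterates are defined by this recursion also for $t>T$). *)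

From HB Require Import structures.
From mathcomp Require Import all_boot all_order all_algebra.
From mathcomp Require Import reals.
Set Implicit Arguments. Unset Strict Implicit. Unset Printing Implicit Defensive.
Import Order.TTheory GRing.Theory Num.Theory.
Local Open Scope ring_scope.

Section Defs.
Variable R : realType.
Variables p q : nat.
Local Notation M := 'M[R]_(p, q).

Definition frob_inner (A B : M) : R := \sum_(i < p) \sum_(j < q) A i j * B i j.
Definition frob (A : M) : R := Num.sqrt (frob_inner A A).

Definition mset := M -> Prop.

Definition convex_set (S : mset) : Prop :=
  forall x y, S x -> S y -> forall a : R, 0 <= a -> a <= 1 ->
    S (a *: x + (1 - a) *: y).

Definition frob_cvg (u : nat -> M) (l : M) : Prop :=
  forall e : R, 0 < e -> exists K : nat, forall k, (K <= k)%N -> frob (u k - l) < e.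
Definition closed_set (S : mset) : Prop :=
  forall (u : nat -> M) (l : M), (forall k, S (u k)) -> frob_cvg u l -> S l.

Definition diam_le (S : mset) (B : R) : Prop :=
  forall x y, S x -> S y -> frob (x - y) <= B.

Definition convex_on (S : mset) (f : M -> R) : Prop :=
  forall x y, S x -> S y -> forall a : R, 0 <= a -> a <= 1 ->
    f (a *: x + (1 - a) *: y) <= a * f x + (1 - a) * f y.

Definition is_gradient (f : M -> R) (G Y : M) : Prop :=
  forall e : R, 0 < e -> exists d : R, 0 < d /\
    forall Z, frob (Z - Y) < d ->
      `|f Z - f Y - frob_inner G (Z - Y)| <= e * frob (Z - Y).

Definition is_projection (S : mset) (P : M -> M) : Prop :=
  forall Y, S (P Y) /\ forall Z, S Z -> frob (Y - P Y) <= frob (Y - Z).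
End Defs.

Section Graphs.
Variable N : nat.
Local Notation V := 'I_N.

Definition sym_rel (E : rel V) : Prop := forall x y, E x y = E y x.

Definition simple_path (E : rel V) (x y : V) (s : seq V) : Prop :=
  path E x s /\ last x s = y /\ uniq (x :: s).

Definition acyclic (E : rel V) : Prop :=
  forall x y s1 s2, simple_path E x y s1 -> simple_path E x y s2 -> s1 = s2.

Definition steiner_tree (G T : rel V) (n : V) (W : pred V) (tt : V -> nat) : Prop :=
  subrel T G /\ sym_rel T /\ acyclic T /\
  forall m, W m -> exists s, simple_path T n m s /\ size s = tt m.
End Graphs.

(** Quantities appearing in the regret bound of DAM-TOGD. [w] is the weight
    matrix, [W n = {m | w n m > 0}], [tau n m] the round-trip delays. *)
Section Consts.
Variable R : realType.
Variable N : nat.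
Variable w : 'I_N -> 'I_N -> R.
Variable L : 'I_N -> R.
Variable tau : 'I_N -> 'I_N -> nat.

Definition Wset (n : 'I_N) : pred 'I_N := fun m => 0 < w n m.

(** K_n = max_{m in W_n} w_{n,m} L_m (all terms are nonnegative). *)
Definition Kn (n : 'I_N) : R := \big[Num.max/0]_(m | Wset n m) (w n m * L m).

(** tau_{n,max} and tau_{n,min} over the (nonempty) set W_n. The neutral
    element of the min is tau_{n,max}, which does not affect the value when
    W_n is nonempty. *)
Definition tau_max (n : 'I_N) : nat := \max_(m | Wset n m) tau n m.
Definition tau_min (n : 'I_N) : nat :=
  \big[minn/tau_max n]_(m | Wset n m) tau n m.
Definition dtau (n : 'I_N) : nat := (tau_max n - tau_min n)%N.
Definition cardW (n : 'I_N) : nat := #|Wset n|.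
Definition sumL (n : 'I_N) : R := \sum_(m | Wset n m) L m.

Definition Qn (n : 'I_N) : R :=
  Kn n / 2 * sumL n + (cardW n)%:R * Kn n ^+ 2 * (\sum_(m | Wset n m) tau n m)%:R.
Definition Pn (n : 'I_N) : R :=
  (cardW n)%:R ^+ 2 * Kn n ^+ 2 * (tau_max n)%:R ^+ 2.
Definition Cn (B : R) (n : 'I_N) : R :=
  (dtau n)%:R / 2 * (Kn n * sumL n + (cardW n)%:R * B ^+ 2).
End Consts.

From HB Require Import structures.
From mathcomp Require Import all_boot all_order all_algebra.
From mathcomp Require Import reals ring lra.
Import Order.TTheory GRing.Theory Num.Theory.
Set Implicit Arguments. Unset Strict Implicit. Unset Printing Implicit Defensive.
Local Open Scope ring_scope.

(* Per agent, convexity bounds the regret by the linearised regret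
   sum_t sum_m w_{n,m} <g_{m,t}, X_t - U>.  Split X_t - U as
   (X_t - X_{t+tau_m}) + (X_{t+tau_m} - U).  The first part is a drift: each
   step moves the iterate by at most eta_s |W_n| K_n, and the gradient has
   norm at most L_m.  The second part, reindexed by the arrival time
   s = t + tau_m, is the online-gradient-descent sum sum_s <d_s, X_s - U> of
   the delayed gradients d_s actually applied, minus the gradients arriving
   after T, each costing at most (K_n L_m + B^2) / 2 by AM-GM.  Since the
   projection is nonexpansive, each OGD step costs the telescoping H_n term
   plus eta_s K_n sum_m L_m / 2. *)

Section Frobenius.
Variables (R : realType) (p q : nat).
Implicit Types (A B C : 'M[R]_(p, q)) (a : R).

Lemma frob_innerC A B : frob_inner A B = frob_inner B A.
Proof. by apply: eq_bigr => i _; apply: eq_bigr => j _; rewrite mulrC. Qed.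

Lemma frob_innerDl A B C : frob_inner (A + B) C = frob_inner A C + frob_inner B C.
Proof.
rewrite /frob_inner -big_split; apply: eq_bigr => i _.
by rewrite -big_split; apply: eq_bigr => j _; rewrite !mxE mulrDl.
Qed.

Lemma frob_innerZl a A C : frob_inner (a *: A) C = a * frob_inner A C.
Proof.
rewrite /frob_inner mulr_sumr; apply: eq_bigr => i _.
by rewrite mulr_sumr; apply: eq_bigr => j _; rewrite !mxE mulrA.
Qed.

Lemma frob_innerNl A C : frob_inner (- A) C = - frob_inner A C.
Proof. by rewrite -scaleN1r frob_innerZl mulN1r. Qed.

Lemma frob_innerBl A B C : frob_inner (A - B) C = frob_inner A C - frob_inner B C.
Proof. by rewrite frob_innerDl frob_innerNl. Qed.

Lemma frob_inner0l C : frob_inner 0 C = 0.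
Proof. by rewrite -(scale0r 0) frob_innerZl mul0r. Qed.

Lemma frob_inner_suml (I : finType) (P : pred I) (F : I -> 'M[R]_(p, q)) C :
  frob_inner (\sum_(i | P i) F i) C = \sum_(i | P i) frob_inner (F i) C.
Proof.
elim/big_rec2: _ => [|i x y _ <-]; first exact: frob_inner0l.
exact: frob_innerDl.
Qed.

Lemma frob_innerDr A B C : frob_inner C (A + B) = frob_inner C A + frob_inner C B.
Proof. by rewrite frob_innerC frob_innerDl !(frob_innerC C). Qed.

Lemma frob_innerZr a A C : frob_inner C (a *: A) = a * frob_inner C A.
Proof. by rewrite frob_innerC frob_innerZl frob_innerC. Qed.

Lemma frob_innerNr A C : frob_inner C (- A) = - frob_inner C A.
Proof. by rewrite frob_innerC frob_innerNl frob_innerC. Qed.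

Lemma frob_innerBr A B C : frob_inner C (A - B) = frob_inner C A - frob_inner C B.
Proof. by rewrite frob_innerDr frob_innerNr. Qed.

Lemma frob_inner_ge0 A : 0 <= frob_inner A A.
Proof. by apply: sumr_ge0 => i _; apply: sumr_ge0 => j _; rewrite -expr2 sqr_ge0. Qed.

Lemma frob_inner_eq0 A : (frob_inner A A == 0) = (A == 0).
Proof.
apply/idP/eqP => [|->]; last by rewrite frob_inner0l.
rewrite psumr_eq0 => [/allP A0|i _]; last first.
  by apply: sumr_ge0 => j _; rewrite -expr2 sqr_ge0.
apply/matrixP => i j; move/(_ i (mem_index_enum _)): A0.
rewrite /= psumr_eq0 => [/allP/(_ j (mem_index_enum _))|k _]; last first.
  by rewrite -expr2 sqr_ge0.
by rewrite /= mulf_eq0 orbb mxE => /eqP.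
Qed.

Lemma frob_ge0 A : 0 <= frob A.
Proof. exact: sqrtr_ge0. Qed.

Lemma frob_sq A : frob A ^+ 2 = frob_inner A A.
Proof. by rewrite sqr_sqrtr // frob_inner_ge0. Qed.

Lemma frob_eq0 A : (frob A == 0) = (A == 0).
Proof. by rewrite -sqrf_eq0 frob_sq frob_inner_eq0. Qed.

Lemma frob0 : frob (0 : 'M[R]_(p, q)) = 0.
Proof. by apply/eqP; rewrite frob_eq0. Qed.

Lemma frobZ a A : frob (a *: A) = `|a| * frob A.
Proof.
by rewrite /frob frob_innerZl frob_innerZr mulrA -expr2 sqrtrM ?sqr_ge0 // sqrtr_sqr.
Qed.

Lemma frobN A : frob (- A) = frob A.
Proof. by rewrite -scaleN1r frobZ normrN1 mul1r. Qed.

Lemma ler_frob A B : (frob A <= frob B) = (frob_inner A A <= frob_inner B B).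
Proof. by rewrite /frob ler_sqrt // frob_inner_ge0. Qed.

Lemma frob_sqrD A B :
  frob (A + B) ^+ 2 = frob A ^+ 2 + 2 * frob_inner A B + frob B ^+ 2.
Proof. by rewrite !frob_sq frob_innerDl !frob_innerDr (frob_innerC B A); ring. Qed.

(* Expand [0 <= |b A - a B|^2] with [a = |A|], [b = |B|]. *)
Lemma frob_inner_le A B : frob_inner A B <= frob A * frob B.
Proof.
have [A0|A0] := eqVneq A 0; first by rewrite A0 frob_inner0l frob0 mul0r.
have [B0|B0] := eqVneq B 0.
  by rewrite B0 frob_innerC frob_inner0l frob0 mulr0.
have ab_gt0 : 0 < frob A * frob B.
  by rewrite mulr_gt0 // lt_def frob_eq0 ?A0 ?B0 frob_ge0.
have := frob_inner_ge0 (frob B *: A - frob A *: B).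
rewrite !frob_innerBl !frob_innerBr !frob_innerZl !frob_innerZr -!frob_sq.
by rewrite (frob_innerC B A); nra.
Qed.

Lemma frobD A B : frob (A + B) <= frob A + frob B.
Proof.
rewrite -ler_sqr ?nnegrE ?addr_ge0 ?frob_ge0 //.
by rewrite frob_sqrD sqrrD lerD2r lerD2l mulr_natl lerMn2r frob_inner_le.
Qed.

Lemma frob_sum (I : finType) (P : pred I) (F : I -> 'M[R]_(p, q)) :
  frob (\sum_(i | P i) F i) <= \sum_(i | P i) frob (F i).
Proof.
elim/big_rec2: _ => [|i y x _ h]; first by rewrite frob0.
by apply: le_trans (frobD _ _) _; rewrite lerD2l.
Qed.

End Frobenius.

Section Projection.
Variables (R : realType) (p q : nat) (S : mset R p q).
Variable P : 'M[R]_(p, q) -> 'M[R]_(p, q).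
Hypotheses (S_convex : convex_set S) (P_proj : is_projection S P).

(* If the angle were acute, moving from [P Y] towards [Z] by the step [a]
   below would get closer to [Y]. *)
Lemma projection_obtuse Y Z : S Z -> frob_inner (Y - P Y) (Z - P Y) <= 0.
Proof.
move=> SZ; have [SPY P_min] := P_proj Y.
set V := Y - P Y; set W := Z - P Y.
rewrite leNgt; apply/negP => c_gt0.
have D_ge0 := frob_inner_ge0 W.
pose a := frob_inner V W / (frob_inner V W + frob_inner W W).
have a_gt0 : 0 < a by rewrite divr_gt0 // ltr_wpDr.
have a_le1 : a <= 1 by rewrite ler_pdivrMr ?ltr_wpDr // mul1r lerDl.
have aE : a * (frob_inner V W + frob_inner W W) = frob_inner V W.
  by rewrite mulfVK // gt_eqF // ltr_wpDr.
have := P_min _ (S_convex SZ SPY (ltW a_gt0) a_le1); rewrite -/V.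
have -> : Y - (a *: Z + (1 - a) *: P Y) = V - a *: W.
  by apply/matrixP => i j; rewrite !mxE; ring.
clearbody V W; rewrite ler_frob frob_innerBl !frob_innerBr !frob_innerZl.
rewrite !frob_innerZr (frob_innerC W); nra.
Qed.

Lemma projection_nonexpansive Y Z : S Z -> frob (P Y - Z) <= frob (Y - Z).
Proof.
move=> SZ; have := projection_obtuse Y SZ.
have -> : Y - Z = (Y - P Y) - (Z - P Y) by rewrite opprB addrA subrK.
rewrite -[P Y - Z]opprB frobN; move: (Y - P Y) (Z - P Y) => V W obtuse.
rewrite ler_frob frob_innerBl !frob_innerBr (frob_innerC W V).
by have := frob_inner_ge0 V; lra.
Qed.

End Projection.

(* On the chord from [Y] to [U], at a step [a] small enough for the first-order
   expansion at [Y] to be [e]-accurate, convexity bounds [f] from above. *)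
Lemma convex_gradient_le (R : realType) (p q : nat) (S : mset R p q)
    (f : 'M[R]_(p, q) -> R) (G Y U : 'M[R]_(p, q)) :
  convex_on S f -> is_gradient f G Y -> S Y -> S U ->
  frob_inner G (U - Y) <= f U - f Y.
Proof.
move=> f_cvx fG SY SU; apply/ler_addgt0Pr => e e_gt0.
set F := frob (U - Y); have F_ge0 : 0 <= F := frob_ge0 _.
have F1_gt0 : 0 < F + 1 by rewrite ltr_wpDl.
set e' := e / (F + 1).
have e'F_le : e' * F <= e.
  by rewrite /e' mulrAC ler_pdivrMr // ler_pM2l // lerDl.
have e'_gt0 : 0 < e' by rewrite divr_gt0.
have [d [d_gt0 f_near]] := fG e' e'_gt0.
have Fd_gt0 : 0 < F + d by rewrite ltr_wpDl.
pose a := d / (F + d).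
have a_gt0 : 0 < a by rewrite divr_gt0.
have a_le1 : a <= 1 by rewrite ler_pdivrMr // mul1r lerDr.
have aE : a * (F + d) = d by rewrite mulfVK // gt_eqF.
have shift : a *: U + (1 - a) *: Y - Y = a *: (U - Y).
  by apply/matrixP => i j; rewrite !mxE; ring.
have near : frob (a *: U + (1 - a) *: Y - Y) < d.
  by rewrite shift frobZ gtr0_norm // -/F; nra.
have := f_near _ near; rewrite shift frobZ (gtr0_norm a_gt0) frob_innerZr -/F.
rewrite ler_norml => /andP[lin _].
have := f_cvx U Y SU SY a (ltW a_gt0) a_le1.
nra.
Qed.

Lemma convex_comb_sqr_le (R : realFieldType) (I : finType) (P : pred I) (c x : I -> R) :
  (forall i, P i -> 0 <= c i) -> \sum_(i | P i) c i = 1 ->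
  (\sum_(i | P i) c i * x i) ^+ 2 <= \sum_(i | P i) c i * x i ^+ 2.
Proof.
move=> c_ge0 c_sum; set m := \sum_(i | P i) c i * x i.
have : 0 <= \sum_(i | P i) c i * (x i - m) ^+ 2.
  by apply: sumr_ge0 => i Pi; rewrite mulr_ge0 ?c_ge0 ?sqr_ge0.
rewrite (eq_bigr (fun i => c i * x i ^+ 2 - 2 * m * (c i * x i) + m ^+ 2 * c i));
  last by move=> i _; ring.
by rewrite big_split sumrB /= -!mulr_sumr c_sum -/m; nra.
Qed.

Lemma ler_sum_nat_subrange (R : numDomainType) (h : nat -> R) a b c d :
  (forall i, 0 <= h i) -> (c <= a)%N -> (b <= d)%N ->
  \sum_(a <= i < b) h i <= \sum_(c <= i < d) h i.
Proof.
move=> h_ge0 le_ca le_bd; have [le_ab|lt_ba] := leqP a b; last first.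
  by rewrite big_geq ?(ltnW lt_ba) ?sumr_ge0.
rewrite (big_cat_nat le_ca (leq_trans le_ab le_bd)) (big_cat_nat le_ab le_bd) /=.
by rewrite addrCA lerDl addr_ge0 ?sumr_ge0.
Qed.

Lemma frob_sub_le_steps (R : realType) (p q : nat) (Y : nat -> 'M[R]_(p, q)) t k :
  frob (Y t - Y (t + k)%N) <= \sum_(j < k) frob (Y (t + j).+1 - Y (t + j)%N).
Proof.
rewrite -opprB frobN -telescope_sumr ?leq_addr //.
rewrite -{1}[t]add0n big_addn addKn big_mkord.
by apply: le_trans (frob_sum _ _) _; apply: ler_sum => j _; rewrite addnC.
Qed.

Section Constants.
Variables (R : realType) (N : nat) (w : 'I_N -> 'I_N -> R) (L : 'I_N -> R).
Variables (tau : 'I_N -> 'I_N -> nat) (n : 'I_N).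

Lemma Kn_ge0 : 0 <= Kn w L n.
Proof. exact: bigmax_ge_id. Qed.

Lemma le_Kn m : Wset w n m -> w n m * L m <= Kn w L n.
Proof. exact: le_bigmax_cond. Qed.

Lemma tau_min_le m : Wset w n m -> (tau_min w tau n <= tau n m)%N.
Proof. by rewrite /tau_min -minEnat; exact: (@bigmin_le_cond _ nat). Qed.

Lemma tau_max_ge m : Wset w n m -> (tau n m <= tau_max w tau n)%N.
Proof. exact: leq_bigmax_cond. Qed.

Lemma tau_min_le_max : (tau_min w tau n <= tau_max w tau n)%N.
Proof. by rewrite /tau_min -minEnat; exact: (@bigmin_le_id _ nat). Qed.

End Constants.

Section Agent.
Variables (R : realType) (p q N : nat) (Xs : mset R p q) (B : R).
Variable f : 'I_N -> nat -> 'M[R]_(p, q) -> R.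
Variable grad : 'I_N -> nat -> 'M[R]_(p, q) -> 'M[R]_(p, q).
Variables (L : 'I_N -> R) (w : 'I_N -> 'I_N -> R) (tau : 'I_N -> 'I_N -> nat).
Variables (proj : 'M[R]_(p, q) -> 'M[R]_(p, q)) (eta : nat -> R).
Variables (X : nat -> 'M[R]_(p, q)) (U : 'M[R]_(p, q)) (T : nat) (n : 'I_N).

Local Notation W := (Wset w n).
Local Notation K := (Kn w L n).
Local Notation sL := (sumL w L n).
Local Notation cW := (cardW w n).
Local Notation tmin := (tau_min w tau n).
Local Notation tmax := (tau_max w tau n).
Local Notation E := (\sum_(tmin.+1 <= t < (T + tmax).+1) eta t).

Definition delayed_grad s : 'M[R]_(p, q) :=
  \sum_(m | W m) w n m *:
    (if (tau n m < s)%N then grad m (s - tau n m) (X (s - tau n m)) else 0).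

Hypotheses (Xs_convex : convex_set Xs) (Xs_diam : diam_le Xs B).
Hypothesis f_convex : forall m t, convex_on Xs (f m t).
Hypothesis grad_f : forall m t Y, Xs Y -> is_gradient (f m t) (grad m t Y) Y.
Hypothesis L_gt0 : forall m, 0 < L m.
Hypothesis grad_le : forall m t Y, Xs Y -> frob (grad m t Y) <= L m.
Hypotheses (w_range : forall m, 0 <= w n m <= 1) (w_sum : \sum_(m < N) w n m = 1).
Hypotheses (proj_Xs : is_projection Xs proj) (X1_Xs : Xs (X 1)).
Hypothesis X_step : forall t, (1 <= t)%N -> X t.+1 = proj (X t - eta t *: delayed_grad t).
Hypothesis eta_gt0 : forall t, (1 <= t)%N -> 0 < eta t.
Hypothesis U_Xs : Xs U.

Lemma iterate_feasible t : (1 <= t)%N -> Xs (X t).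
Proof.
case: t => // t _; elim: t => // t IH.
by rewrite X_step //; exact: (proj_Xs _).1.
Qed.

Lemma w_ge0 m : 0 <= w n m.
Proof. by case/andP: (w_range m). Qed.

Lemma sum_weights : \sum_(m | W m) w n m = 1.
Proof.
rewrite -w_sum [RHS](bigID W) /= [X in _ = _ + X]big1 ?addr0 // => m.
by rewrite /Wset lt_def w_ge0 andbT negbK => /eqP.
Qed.

Definition Lbar := \sum_(m | W m) w n m * L m.

Lemma Lbar_le : Lbar <= cW%:R * K.
Proof.
have -> : cW%:R * K = \sum_(m | W m) K by rewrite mulr_natl /cardW -sumr_const.
by apply: ler_sum => m; exact: le_Kn.
Qed.

Lemma Lbar_sqr_le : Lbar ^+ 2 <= K * sL.
Proof.
apply: le_trans (convex_comb_sqr_le L (fun m _ => w_ge0 m) sum_weights) _.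
rewrite /sumL mulr_sumr; apply: ler_sum => m Wm.
by rewrite expr2 mulrA ler_pM2r ?le_Kn.
Qed.

Lemma delayed_grad_le s : frob (delayed_grad s) <= Lbar.
Proof.
apply: le_trans (frob_sum _ _) _; apply: ler_sum => m _.
rewrite frobZ ger0_norm ?w_ge0 //; apply: (ler_wpM2l (w_ge0 m)).
case: ifP => [lt_tau_s|_]; last by rewrite frob0 ltW.
by apply/grad_le/iterate_feasible; rewrite subn_gt0.
Qed.

Lemma delayed_grad_early s : (s <= tmin)%N -> delayed_grad s = 0.
Proof.
move=> le_s_tmin; apply: big1 => m Wm; rewrite ifF ?scaler0 //.
by apply/negbTE; rewrite -leqNgt (leq_trans le_s_tmin) ?tau_min_le.
Qed.

Definition step_bound s := if (tmin < s)%N then eta s * (cW%:R * K) else 0.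

Lemma step_bound_ge0 s : 0 <= step_bound s.
Proof.
rewrite /step_bound; case: ifP => // lt_tmin_s.
by rewrite mulr_ge0 ?mulr_ge0 ?Kn_ge0 // ltW // eta_gt0 // (leq_ltn_trans _ lt_tmin_s).
Qed.

Lemma iterate_step_le s : (1 <= s)%N -> frob (X s.+1 - X s) <= step_bound s.
Proof.
move=> s_ge1; rewrite X_step //.
apply: le_trans (projection_nonexpansive Xs_convex proj_Xs _ (iterate_feasible s_ge1)) _.
rewrite addrAC subrr add0r frobN frobZ gtr0_norm ?eta_gt0 // /step_bound.
case: ifP => [_|/negbT]; last first.
  by rewrite -leqNgt => /delayed_grad_early ->; rewrite frob0 mulr0.
by rewrite ler_pM2l ?eta_gt0 // (le_trans (delayed_grad_le s)) ?Lbar_le.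
Qed.

(* Expanding [|X s - eta s d s - U|^2], which bounds [|X s.+1 - U|^2] since
   the projection is nonexpansive towards [U]. *)
Lemma ogd_step_le s : (1 <= s)%N ->
  frob_inner (delayed_grad s) (X s - U) <=
  (frob (X s - U) ^+ 2 - frob (X s.+1 - U) ^+ 2) / (2 * eta s) + eta s * (K * sL) / 2.
Proof.
move=> s_ge1; have eta_s := eta_gt0 s_ge1.
have := projection_nonexpansive Xs_convex proj_Xs (X s - eta s *: delayed_grad s) U_Xs.
rewrite -X_step // -ler_sqr ?nnegrE ?frob_ge0 // addrAC.
rewrite [frob (X s - U + _) ^+ 2]frob_sqrD frobN frobZ gtr0_norm //.
rewrite frob_innerNr frob_innerZr frob_innerC => h.
have d_sq : frob (delayed_grad s) ^+ 2 <= K * sL.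
  apply: le_trans Lbar_sqr_le.
  have Lbar_ge0 := le_trans (frob_ge0 _) (delayed_grad_le s).
  by rewrite ler_sqr ?nnegrE ?frob_ge0 ?delayed_grad_le.
have -> : (frob (X s - U) ^+ 2 - frob (X s.+1 - U) ^+ 2) / (2 * eta s) + eta s * (K * sL) / 2
  = (frob (X s - U) ^+ 2 - frob (X s.+1 - U) ^+ 2 + eta s ^+ 2 * (K * sL)) / (2 * eta s).
  by field; rewrite gt_eqF.
rewrite ler_pdivlMr ?mulr_gt0 //.
have := ler_wpM2l (sqr_ge0 (eta s)) d_sq; rewrite exprMn in h; nra.
Qed.

Definition delayed_term m s :=
  w n m * frob_inner (grad m (s - tau n m) (X (s - tau n m))) (X s - U).

Lemma regret_le_drift_delayed :
  \sum_(1 <= t < T.+1) \sum_(m | W m) w n m * f m t (X t)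
  - \sum_(1 <= t < T.+1) \sum_(m | W m) w n m * f m t U
  <= \sum_(1 <= t < T.+1) \sum_(m | W m)
       w n m * frob_inner (grad m t (X t)) (X t - X (t + tau n m)%N)
   + \sum_(1 <= t < T.+1) \sum_(m | W m) delayed_term m (t + tau n m).
Proof.
rewrite -big_split -sumrB; apply: ler_sum_nat => t /andP[t_ge1 _].
rewrite -big_split -sumrB; apply: ler_sum => m _ /=.
rewrite /delayed_term addnK -mulrDr -frob_innerDr addrA subrK -mulrBr.
apply: (ler_wpM2l (w_ge0 m)).
have Xt := iterate_feasible t_ge1.
have := convex_gradient_le (f_convex m t) (grad_f m t Xt) Xt U_Xs.
by rewrite -opprB frob_innerNr; lra.
Qed.

Lemma step_bound_window j : (j <= tmax)%N ->
  \sum_(1 <= t < T.+1) step_bound (t + j) <= E * (cW%:R * K).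
Proof.
move=> le_j_tmax.
have -> : \sum_(1 <= t < T.+1) step_bound (t + j) = \sum_(1 + j <= s < T.+1 + j) step_bound s.
  by rewrite big_addn addnK.
apply: le_trans (ler_sum_nat_subrange (d := (T + tmax).+1) step_bound_ge0 (leq0n _) _) _.
  by rewrite addSn ltnS leq_add2l.
rewrite (big_cat_nat (leq0n tmin.+1)) /=; last first.
  by rewrite ltnS (leq_trans (tau_min_le_max w tau n)) ?leq_addl.
rewrite big_nat_cond big1 ?add0r => [|s /andP[/andP[_ lt_s] _]]; last first.
  by rewrite /step_bound ltnNge -ltnS lt_s.
rewrite mulr_suml; apply: ler_sum_nat => s /andP[lt_tmin_s _].
by rewrite /step_bound lt_tmin_s.
Qed.

Lemma drift_le :
  \sum_(1 <= t < T.+1) \sum_(m | W m)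
     w n m * frob_inner (grad m t (X t)) (X t - X (t + tau n m)%N)
  <= cW%:R * K ^+ 2 * (\sum_(m | W m) tau n m)%:R * E.
Proof.
apply: (@le_trans _ _ (\sum_(1 <= t < T.+1) \sum_(m | W m)
                         K * \sum_(j < tau n m) step_bound (t + j))).
  apply: ler_sum_nat => t /andP[t_ge1 _]; apply: ler_sum => m Wm.
  have drift_m : frob_inner (grad m t (X t)) (X t - X (t + tau n m)%N)
                 <= L m * \sum_(j < tau n m) step_bound (t + j).
    apply: le_trans (frob_inner_le _ _) _.
    apply: ler_pM; [exact: frob_ge0 | exact: frob_ge0 | exact/grad_le/iterate_feasible |].
    apply: le_trans (frob_sub_le_steps _ _ _) _; apply: ler_sum => j _.
    by apply: iterate_step_le; rewrite addn_gt0 t_ge1.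
  apply: le_trans (ler_wpM2l (w_ge0 m) drift_m) _; rewrite mulrA.
  by apply: ler_wpM2r; [apply: sumr_ge0 => j _; exact: step_bound_ge0 | exact: le_Kn].
rewrite exchange_big /= natr_sum [_ * (\sum_(m | _) _)]mulr_sumr mulr_suml.
apply: ler_sum => m Wm; rewrite -mulr_sumr exchange_big /=.
have window : \sum_(j < tau n m) \sum_(1 <= t < T.+1) step_bound (t + j)
              <= \sum_(j < tau n m) E * (cW%:R * K).
  apply: ler_sum => j _; apply: step_bound_window.
  by rewrite (leq_trans (ltnW (ltn_ord j))) ?tau_max_ge.
apply: le_trans (ler_wpM2l (Kn_ge0 w L n) window) _.
rewrite sumr_const card_ord -[_ *+ tau n m]mulr_natr.
by rewrite [leRHS](_ : _ = K * (E * (cW%:R * K) * (tau n m)%:R)) //; ring.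
Qed.

Lemma ogd_sum_by_source :
  \sum_(tmin.+1 <= s < (T + tmax).+1) frob_inner (delayed_grad s) (X s - U)
  = \sum_(m | W m) \sum_((tau n m).+1 <= s < (T + tmax).+1) delayed_term m s.
Proof.
transitivity (\sum_(tmin.+1 <= s < (T + tmax).+1) \sum_(m | W m)
                 (if (tau n m < s)%N then delayed_term m s else 0)).
  apply: eq_bigr => s _; rewrite frob_inner_suml; apply: eq_bigr => m _.
  by rewrite frob_innerZl; case: ifP; rewrite ?frob_inner0l ?mulr0.
rewrite exchange_big /=; apply: eq_bigr => m Wm.
rewrite (big_cat_nat (n := (tau n m).+1)) /= ?ltnS ?tau_min_le //; last first.
  by rewrite (leq_trans (tau_max_ge tau Wm)) ?leq_addl.
rewrite big_nat_cond big1 ?add0r => [|s /andP[/andP[_ lt_s] _]]; last first.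
  by rewrite ifF // ltnNge -ltnS lt_s.
by apply: eq_big_nat => s /andP[lt_tau_s _]; rewrite lt_tau_s.
Qed.

Lemma delayed_sum_eq :
  \sum_(1 <= t < T.+1) \sum_(m | W m) delayed_term m (t + tau n m)
  = \sum_(tmin.+1 <= s < (T + tmax).+1) frob_inner (delayed_grad s) (X s - U)
    - \sum_(m | W m) \sum_((T + tau n m).+1 <= s < (T + tmax).+1) delayed_term m s.
Proof.
rewrite ogd_sum_by_source -sumrB exchange_big /=; apply: eq_bigr => m Wm.
have -> : \sum_(1 <= t < T.+1) delayed_term m (t + tau n m)
          = \sum_(1 + tau n m <= s < T.+1 + tau n m) delayed_term m s.
  by rewrite big_addn addnK.
rewrite add1n addSn [X in _ = X - _](big_cat_nat (n := (T + tau n m).+1)) ?addrK //.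
  by rewrite ltnS leq_addl.
by rewrite ltnS leq_add2l tau_max_ge.
Qed.

(* AM-GM: [(w L) B <= ((w L)^2 + B^2) / 2], and [(w L)^2 <= K L] as [w <= 1]. *)
Lemma delayed_term_ge m s : W m -> (tau n m < s)%N ->
  - delayed_term m s <= (K * L m + B ^+ 2) / 2.
Proof.
move=> Wm lt_tau_s.
have inner_le : frob_inner (grad m (s - tau n m) (X (s - tau n m))) (U - X s) <= L m * B.
  apply: le_trans (frob_inner_le _ _) _.
  apply: ler_pM; rewrite ?frob_ge0 //.
    by apply/grad_le/iterate_feasible; rewrite subn_gt0.
  by apply/(Xs_diam U_Xs)/iterate_feasible; exact: leq_ltn_trans (leq0n _) lt_tau_s.
have wL_ge0 : 0 <= w n m * L m by rewrite mulr_ge0 ?w_ge0 ?ltW.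
have wL_le_L : w n m * L m <= L m.
  by apply: ler_piMl; [exact: ltW | case/andP: (w_range m)].
have wL_sqr : (w n m * L m) * (w n m * L m) <= K * L m by rewrite ler_pM ?le_Kn.
rewrite /delayed_term -mulrN -frob_innerNr opprB.
have := ler_wpM2l (w_ge0 m) inner_le; have := sqr_ge0 (w n m * L m - B); nra.
Qed.

Lemma tail_le_Cn :
  - \sum_(m | W m) \sum_((T + tau n m).+1 <= s < (T + tmax).+1) delayed_term m s
  <= Cn w L tau B n.
Proof.
pose c m := (K * L m + B ^+ 2) / 2.
suff <- : \sum_(m | W m) c m * (dtau w tau n)%:R = Cn w L tau B n.
  rewrite -sumrN; apply: ler_sum => m Wm; rewrite -sumrN.
  apply: (@le_trans _ _ (\sum_((T + tau n m).+1 <= s < (T + tmax).+1) c m)).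
    apply: ler_sum_nat => s /andP[lt_s _]; apply: delayed_term_ge => //.
    by apply: leq_ltn_trans lt_s; rewrite leq_addl.
  rewrite sumr_const_nat mulr_natr; apply: ler_wpMn2l.
    by rewrite divr_ge0 ?addr_ge0 ?sqr_ge0 ?mulr_ge0 ?Kn_ge0 ?ltW.
  by rewrite /dtau subSS subnDl leq_sub2l ?tau_min_le.
have sum_B : \sum_(m | W m) B ^+ 2 = B ^+ 2 * cW%:R by rewrite mulr_natr -sumr_const.
by rewrite -mulr_suml /c -mulr_suml big_split /= -mulr_sumr sum_B /Cn /sumL; ring.
Qed.

Lemma ogd_sum_le :
  \sum_(tmin.+1 <= s < (T + tmax).+1) frob_inner (delayed_grad s) (X s - U)
  <= \sum_(tmin.+1 <= s < (T + tmax).+1)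
        (frob (X s - U) ^+ 2 - frob (X s.+1 - U) ^+ 2) / (2 * eta s)
     + E * (K * sL) / 2.
Proof.
rewrite !mulr_suml -big_split; apply: ler_sum_nat => s /andP[lt_s _].
exact/ogd_step_le/(leq_ltn_trans (leq0n _) lt_s).
Qed.

Lemma agent_regret_le :
  \sum_(1 <= t < T.+1) \sum_(m | W m) w n m * f m t (X t)
  - \sum_(1 <= t < T.+1) \sum_(m | W m) w n m * f m t U
  <= Qn w L tau n * E + Pn w L tau n * eta tmin.+1
     + \sum_(tmin.+1 <= t < (T + tmax).+1)
          (frob (X t - U) ^+ 2 - frob (X t.+1 - U) ^+ 2) / (2 * eta t)
     + Cn w L tau B n.
Proof.
apply: le_trans regret_le_drift_delayed _; rewrite delayed_sum_eq.
have Pn_ge0 : 0 <= Pn w L tau n * eta tmin.+1.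
  by apply: mulr_ge0; [rewrite /Pn -!exprMn sqr_ge0 | exact/ltW/eta_gt0].
have := drift_le; have := ogd_sum_le; have := tail_le_Cn.
have -> : Qn w L tau n * E = E * (K * sL) / 2
    + cW%:R * K ^+ 2 * (\sum_(m | W m) tau n m)%:R * E by rewrite /Qn; ring.
lra.
Qed.

End Agent.

Theorem theorem3
  (R : realType) (p q N : nat)
  (Xs : 'M[R]_(p, q) -> Prop) (B : R)
  (f : 'I_N -> nat -> 'M[R]_(p, q) -> R)
  (grad : 'I_N -> nat -> 'M[R]_(p, q) -> 'M[R]_(p, q))
  (L : 'I_N -> R)
  (w : 'I_N -> 'I_N -> R)
  (G : rel 'I_N) (Tr : 'I_N -> rel 'I_N) (tt : 'I_N -> 'I_N -> nat)
  (proj : 'M[R]_(p, q) -> 'M[R]_(p, q))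
  (eta : 'I_N -> nat -> R)
  (X : 'I_N -> nat -> 'M[R]_(p, q))
  (U : 'I_N -> 'M[R]_(p, q))
  (T : nat) :
  (* the feasible set: closed, convex, bounded with diameter B *)
  closed_set Xs -> convex_set Xs -> diam_le Xs B ->
  (* losses: convex on Xs, with gradients bounded by L_m > 0 *)
  (forall m t, convex_on Xs (f m t)) ->
  (forall m t Y, Xs Y -> is_gradient (f m t) (grad m t Y) Y) ->
  (forall m, 0 < L m) ->
  (forall m t Y, Xs Y -> frob (grad m t Y) <= L m) ->
  (* row-stochastic weight matrix *)
  (forall n m, 0 <= w n m <= 1) ->
  (forall n, \sum_(m < N) w n m = 1) ->
  (* connected undirected graph and Steiner trees giving the delays *)
  sym_rel G -> (forall x, ~~ G x x) -> (forall x y, connect G x y) ->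
  (forall n, steiner_tree G (Tr n) n (Wset w n) (tt n)) ->
  (* Euclidean projection onto Xs *)
  is_projection Xs proj ->
  (* DAM-TOGD, with round-trip delays tau_{n,m} = 2 * tt n m *)
  (forall n, Xs (X n 1%N)) ->
  (forall n t, (1 <= t)%N ->
     X n t.+1 = proj (X n t - eta n t *:
       \sum_(m | Wset w n m) w n m *:
          (if (2 * tt n m < t)%N
           then grad m (t - 2 * tt n m)%N (X n (t - 2 * tt n m)%N)
           else 0))) ->
  (* positive, non-increasing learning rates *)
  (forall n t, (1 <= t)%N -> 0 < eta n t) ->
  (forall n t, (1 <= t)%N -> eta n t.+1 <= eta n t) ->
  (* comparators U_n^* : minimizers of the cumulative weighted loss over Xs *)
  (forall n, Xs (U n) /\
     forall V, Xs V ->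
       \sum_(1 <= t < T.+1) \sum_(m | Wset w n m) w n m * f m t (U n)
       <= \sum_(1 <= t < T.+1) \sum_(m | Wset w n m) w n m * f m t V) ->
  (0 < T)%N ->
  let tau := fun n m => (2 * tt n m)%N in
  \sum_(n < N)
     (\sum_(1 <= t < T.+1) \sum_(m | Wset w n m) w n m * f m t (X n t)
      - \sum_(1 <= t < T.+1) \sum_(m | Wset w n m) w n m * f m t (U n))
  <= \sum_(n < N)
     ( Qn w L tau n * \sum_((tau_min w tau n).+1 <= t < (T + tau_max w tau n).+1) eta n t
     + Pn w L tau n * eta n (tau_min w tau n).+1
     + \sum_((tau_min w tau n).+1 <= t < (T + tau_max w tau n).+1)
          ((frob (X n t - U n)) ^+ 2 - (frob (X n t.+1 - U n)) ^+ 2) / (2 * eta n t)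
     + Cn w L tau B n ).
Proof.
move=> _ Xs_convex Xs_diam f_convex grad_f L_gt0 grad_le w_range w_sum _ _ _ _.
move=> proj_Xs X1_Xs X_step eta_gt0 _ U_opt _ /=.
apply: ler_sum => n _.
exact: (agent_regret_le T Xs_convex Xs_diam f_convex grad_f L_gt0 grad_le
          (w_range n) (w_sum n) proj_Xs (X1_Xs n) (X_step n) (eta_gt0 n) (U_opt n).1).
Qed.
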